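(* There exists at most one family $(\phi_k)_{k\geq 0}$ of $\mathbb{Z}[q,q^{-1}]$-linear maps $\phi_k\colon H_k\to\mathbb{Q}(q)$ satisfying all of the following: (i) $\phi_k(xy)=\phi_k(yx)$ for all $k$ and all $x,y\in H_k$; (ii) $\phi_0(1)=1$ and $\phi_1(1)=1$; (iii) for every $k\geq 2$ and every word $w$ in $\tau_1,\dots,\tau_{k-1}$ such that some letter $\tau_i$ ($1\le i\le k-1$) does not occur in $w$, one has $\phi_k(\theta_w)=0$; (iv) for every $k\geq 2$ and every $x\in H_{k-1}\subset H_k$, one has $\phi_k(\theta_{k-1}x)=\phi_{k-1}(x)$.
   Context: For $n\geq 0$, the Hecke algebra $H_n$ is the unital $\mathbb{Z}[q,q^{-1}]$-algebra generated by $\theta_1,\dots,\theta_{n-1}$ (so $H_0=H_1=\mathbb{Z}[q,q^{-1}]$) subject to the relations $\theta_i^2=[2]\theta_i$ (with $[2]=q+q^{-1}$); $\theta_i\theta_j=\theta_j\theta_i$ for $|i-j|\geq 2$; and $\theta_i\theta_{i+1}\theta_i+\theta_{i+1}=\theta_{i+1}\theta_i\theta_{i+1}+\theta_i$ for $1\le i\le n-2$. For $n\geq2$, $H_{n-1}$ embeds in $H_n$ via $\theta_i\mapsto\theta_i$. Let $\tau_i=(i\ i+1)\in S_n$ and for a word $w=\tau_{i_1}\cdots\tau_{i_l}$ set $\theta_w=\theta_{i_1}\cdots\theta_{i_l}$. Graphically, $\theta_i$ is drawn as $n$ upward strands of label $1$ where strands $i,i+1$ merge into an edge of label $2$ (a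 ``dumble'') and split again; $\phi_k$ models a function on the closures of such diagrams in an annulus (vinyl graphs of level $k$), condition (iii) says $\phi$ vanishes on disconnected closures, and condition (iv) says closures related by removing an outer curl (an outer digon) have equal value. *)

From HB Require Import structures.
From mathcomp Require Import all_boot all_order all_algebra.
From mathcomp Require Import fraction.
Set Implicit Arguments. Unset Strict Implicit. Unset Printing Implicit Defensive.
Import Order.TTheory GRing.Theory Num.Theory.
Local Open Scope ring_scope.

Definition Qq : fieldType := {fraction {poly rat}}.
Definition qQ : Qq := tofrac 'X.

Definition qpow (A : pzRingType) (q qi : A) (m : int) : A :=
  match m with Posz n => q ^+ n | Negz n => qi ^+ n.+1 end.

(* theta_w for a word w = [:: i_1; ...; i_l] (letters are the indices i
   of the generators tau_i / theta_i) *)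
Definition theta_word (A : pzRingType) (th : nat -> A) (w : seq nat) : A :=
  \prod_(i <- w) th i.

Definition is_word (n : nat) (w : seq nat) : bool :=
  all (fun i : nat => (1 <= i <= n.-1)%N) w.

(* A family (H n)_n of Z[q,q^-1]-algebras (rings with a central unit q with
   inverse qi) with elements theta_1..theta_{n-1} satisfying the Hecke
   relations, spanned over Z[q,q^-1] by the theta_w, together with the
   structure maps H_{n} -> H_{n+1} (theta_i |-> theta_i). *)
Definition hecke_family (H : nat -> pzRingType) (q qi : forall n, H n)
    (th : forall n, nat -> H n) (iota : forall n, H n -> H n.+1) : Prop :=
  (forall n, q n * qi n = 1 /\ qi n * q n = 1) /\
  (forall n (x : H n), q n * x = x * q n) /\
  (forall n i, (1 <= i <= n.-1)%N ->
     th n i * th n i = (q n + qi n) * th n i) /\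
  (forall n i j, (1 <= i <= n.-1)%N -> (1 <= j <= n.-1)%N ->
     (j + 2 <= i)%N || (i + 2 <= j)%N -> th n i * th n j = th n j * th n i) /\
  (forall n i, (1 <= i)%N -> (i <= n - 2)%N ->
     th n i * th n i.+1 * th n i + th n i.+1 =
     th n i.+1 * th n i * th n i.+1 + th n i) /\
  (forall n (x : H n), exists s : seq (int * int * seq nat),
     all (fun t => is_word n t.2) s /\
     x = \sum_(t <- s) (t.1.1%:~R * qpow (q n) (qi n) t.1.2
                          * theta_word (th n) t.2)) /\
  (forall n, iota n 1 = 1 /\ iota n (q n) = q n.+1 /\
     (forall x y, iota n (x + y) = iota n x + iota n y) /\
     (forall x y, iota n (x * y) = iota n x * iota n y) /\
     (forall i, (1 <= i <= n.-1)%N -> iota n (th n i) = th n.+1 i)).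

Definition trace_family (H : nat -> pzRingType) (q qi : forall n, H n)
    (th : forall n, nat -> H n) (iota : forall n, H n -> H n.+1)
    (phi : forall n, H n -> Qq) : Prop :=
  (forall n (x y : H n), phi n (x + y) = phi n x + phi n y) /\
  (forall n (x : H n), phi n (q n * x) = qQ * phi n x) /\
  (forall n (x : H n), phi n (qi n * x) = qQ^-1 * phi n x) /\
  (forall n (x y : H n), phi n (x * y) = phi n (y * x)) /\
  phi 0%N 1 = 1 /\ phi 1%N 1 = 1 /\
  (forall k w, (2 <= k)%N -> is_word k w ->
     (exists i, [/\ (1 <= i)%N, (i <= k.-1)%N & i \notin w]) ->
     phi k (theta_word (th k) w) = 0) /\
  (forall k (x : H k), (1 <= k)%N ->
     phi k.+1 (th k.+1 k * iota k x) = phi k x).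

From HB Require Import structures.
From mathcomp Require Import all_boot all_order all_algebra.
From mathcomp Require Import zify.
Set Implicit Arguments. Unset Strict Implicit. Unset Printing Implicit Defensive.
Import GRing.Theory.
Local Open Scope ring_scope.

(* Two families phi, psi satisfying (i)-(iv) are both Z[q,q^-1]-linear, so
   they agree on H_n as soon as they agree on every word theta_w (H_n is
   spanned by the theta_w).  Words are handled by strong induction on n:

   - Normal form (section NormalForm, a purely ring-theoretic statement):
     using theta_i^2 = [2] theta_i, far commutation and the braid-type
     relation, every theta_w with letters in 1..p lies in the Z[q,q^-1]-span
     of words in 1..p containing the top letter p at most once.  The proof
     eliminates, by induction on the number of occurrences of p, the
     subword p a p between two consecutive occurrences of p.
   - For n >= 2 and such a reduced word w in 1..n-1: if n-1 does not occur,
     phi_n(theta_w) = 0 by (iii); if w = s (n-1) t, then by (i) and (iv)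
     phi_n(theta_w) = phi_{n-1}(theta_{ts}), and the induction applies.
   The same computations hold for psi, whence phi = psi. *)

Definition letters (p : nat) (w : seq nat) : bool :=
  all (fun i : nat => (1 <= i <= p)%N) w.

Definition reduced (p : nat) (w : seq nat) : bool :=
  letters p w && (count_mem p w <= 1)%N.

Lemma letters_cat p u v : letters p (u ++ v) = letters p u && letters p v.
Proof. exact: all_cat. Qed.

Lemma letters_cons p i v : letters p (i :: v) = (1 <= i <= p)%N && letters p v.
Proof. by []. Qed.

Lemma letters_mono p p' w : (p <= p')%N -> letters p w -> letters p' w.
Proof. by move=> le_pp' /allP lw; apply/allP => j /lw; lia. Qed.

Lemma letters_notin p w : letters p w -> p \notin w -> letters p.-1 w.
Proof.
move=> /allP lw pw; apply/allP => j jw; have := lw j jw.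
have : j != p by apply: contraNneq pw => <-.
rewrite /=; lia.
Qed.

Lemma notin_letters p k w : letters p w -> (p < k)%N -> k \notin w.
Proof. by move=> /allP lw lt_pk; apply/negP => /lw /=; lia. Qed.

(* Unfolding count_mem on a cons, keeping the count_mem form of the tail. *)
Lemma count_mem_cons (k i : nat) (w : seq nat) :
  count_mem k (i :: w) = ((i == k) + count_mem k w)%N.
Proof. by []. Qed.

Lemma split_first (k : nat) (w : seq nat) : k \in w -> exists s t, w = s ++ k :: t /\ k \notin s.
Proof.
elim: w => // i w IH; rewrite in_cons; case: eqP => [->|ne_ki] /= kw.
  by exists [::], w.
have [s [t [-> ks]]] := IH kw.
by exists (i :: s), t; rewrite in_cons negb_or ks andbT; split => //; apply/eqP.
Qed.

Lemma split_two (k : nat) (w : seq nat) : (1 < count_mem k w)%N ->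
  exists x a y, [/\ w = x ++ k :: a ++ k :: y, k \notin x & k \notin a].
Proof.
move=> gt1; have /split_first [x [r [ew kx]]] : k \in w by rewrite -has_pred1 has_count; lia.
have /split_first [a [y [er ka]]] : k \in r.
  by move: gt1; rewrite ew count_cat count_mem_cons eqxx (count_memPn kx) -has_pred1 has_count; lia.
by exists x, a, y; rewrite ew er.
Qed.

Section ThetaWords.
Variables (R : pzRingType) (th : nat -> R).
Local Notation theta := (theta_word th).

Lemma theta_nil : theta [::] = 1.
Proof. by rewrite /theta_word big_nil. Qed.

Lemma theta_cons i w : theta (i :: w) = th i * theta w.
Proof. by rewrite /theta_word big_cons. Qed.

Lemma theta_cat u v : theta (u ++ v) = theta u * theta v.
Proof. by rewrite /theta_word big_cat. Qed.

Lemma theta_seq1 i : theta [:: i] = th i.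
Proof. by rewrite theta_cons theta_nil mulr1. Qed.

Lemma theta_comm i w : (forall j, j \in w -> th i * th j = th j * th i) ->
  th i * theta w = theta w * th i.
Proof.
elim: w => [|j w IH] comm_w; first by rewrite theta_nil mulr1 mul1r.
rewrite theta_cons mulrA comm_w ?mem_head // -!mulrA IH // => k kw.
by apply: comm_w; rewrite in_cons kw orbT.
Qed.

End ThetaWords.

Section Span.
Variables (R : pzRingType) (q qi : R) (th : nat -> R).
Local Notation theta := (theta_word th).

Inductive hspan (S : seq nat -> Prop) : R -> Prop :=
  | span_word w : S w -> hspan S (theta w)
  | span0 : hspan S 0
  | spanD x y : hspan S x -> hspan S y -> hspan S (x + y)
  | spanN x : hspan S x -> hspan S (- x)
  | spanq x : hspan S x -> hspan S (q * x)
  | spanqi x : hspan S x -> hspan S (qi * x).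

Lemma span_trans S T x : hspan S x ->
  (forall w, S w -> hspan T (theta w)) -> hspan T x.
Proof.
move=> Sx ST; elim: Sx => *;
  by [apply: ST | apply: span0 | apply: spanD | apply: spanN | apply: spanq | apply: spanqi].
Qed.

Lemma span_intmul S (z : int) x : hspan S x -> hspan S (z%:~R * x).
Proof.
move=> Sx; rewrite mulrzl.
have Sxn m : hspan S (x *+ m).
  by elim: m => [|m IH]; [rewrite mulr0n; apply: span0 | rewrite mulrS; apply: spanD].
by case: z => m; [rewrite -pmulrn | rewrite NegzE mulrNz -pmulrn; apply: spanN].
Qed.

Lemma span_qpow S (m : int) x : hspan S x -> hspan S (qpow q qi m * x).
Proof.
move=> Sx; case: m => [n|n] /=.
  by elim: n => [|n IH]; [rewrite expr0 mul1r | rewrite exprS -mulrA; apply: spanq].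
elim: n => [|n IH]; first by rewrite expr1; apply: spanqi.
by rewrite exprS -mulrA; apply: spanqi.
Qed.

Hypotheses (q_central : forall y, q * y = y * q) (qi_central : forall y, qi * y = y * qi).

Lemma span_mul S u v x : hspan S x ->
  hspan (fun w' => exists2 w, S w & w' = u ++ w ++ v) (theta u * x * theta v).
Proof.
elim=> [w Sw| |x1 y1 _ S1 _ S2|x1 _ S1|x1 _ S1|x1 _ S1].
- by rewrite -!theta_cat -catA; apply: span_word; exists w.
- by rewrite mulr0 mul0r; apply: span0.
- by rewrite mulrDr mulrDl; apply: spanD.
- by rewrite mulrN mulNr; apply: spanN.
- by rewrite mulrA -q_central -2!mulrA; apply: spanq; rewrite mulrA.
- by rewrite mulrA -qi_central -2!mulrA; apply: spanqi; rewrite mulrA.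
Qed.

End Span.

Section NormalForm.
Variables (R : pzRingType) (q qi : R) (th : nat -> R) (N : nat).
Hypotheses (q_central : forall y, q * y = y * q) (qi_central : forall y, qi * y = y * qi).
Hypothesis theta_sq : forall i, (1 <= i <= N.-1)%N -> th i * th i = (q + qi) * th i.
Hypothesis theta_far : forall i j, (1 <= i <= N.-1)%N -> (1 <= j <= N.-1)%N ->
  (j + 2 <= i)%N || (i + 2 <= j)%N -> th i * th j = th j * th i.
Hypothesis theta_braid : forall i, (1 <= i)%N -> (i <= N - 2)%N ->
  th i * th i.+1 * th i + th i.+1 = th i.+1 * th i * th i.+1 + th i.
Local Notation theta := (theta_word th).
Local Notation span := (hspan q qi th).

Lemma theta_comm_far i z : (1 <= i <= N.-1)%N -> letters i.-2 z ->
  th i * theta z = theta z * th i.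
Proof.
move=> range_i /allP lz; apply: theta_comm => j /lz range_j.
by apply: theta_far => //; lia.
Qed.

Lemma sandwich_free p a : (p.+1 <= N.-1)%N -> letters p.-1 a ->
  theta (p.+1 :: a ++ [:: p.+1]) =
  q * theta (a ++ [:: p.+1]) + qi * theta (a ++ [:: p.+1]).
Proof.
move=> le_pN la; have range_p1 : (1 <= p.+1 <= N.-1)%N by lia.
rewrite theta_cons !theta_cat theta_seq1 mulrA theta_comm_far // -mulrA theta_sq //.
by rewrite mulrDl mulrDr !mulrA -q_central -qi_central.
Qed.

(* (p+1) s p t (p+1) = s p (p+1) p t + s (p+1) t - s p t when s, t only use
   letters below p: the braid-type relation, moved past s and t. *)
Lemma sandwich_braid p s t : (1 <= p)%N -> (p.+1 <= N.-1)%N ->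
  letters p.-1 s -> letters p.-1 t ->
  theta (p.+1 :: (s ++ p :: t) ++ [:: p.+1]) =
  theta (s ++ [:: p; p.+1; p] ++ t) + theta (s ++ p.+1 :: t) - theta (s ++ p :: t).
Proof.
move=> ge1_p le_pN ls lt.
have braid : th p.+1 * th p * th p.+1 = th p * th p.+1 * th p + th p.+1 - th p.
  by apply: (addIr (th p)); rewrite subrK -theta_braid //; lia.
have range_p1 : (1 <= p.+1 <= N.-1)%N by lia.
have comm_s := theta_comm_far range_p1 ls.
have comm_t := theta_comm_far range_p1 lt.
rewrite theta_cons -catA !theta_cat theta_seq1 !theta_cons theta_nil mulr1.
have -> : th p.+1 * (theta s * (th p * theta t * th p.+1)) =
    theta s * (th p.+1 * th p * th p.+1) * theta t.
  by rewrite mulrA comm_s -!mulrA -comm_t.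
by rewrite braid mulrBr mulrDr mulrBl mulrDl !mulrA.
Qed.

Lemma reduced_insert p s m t : letters p s -> letters p t ->
  letters p.+1 m -> (count_mem p.+1 m <= 1)%N -> reduced p.+1 (s ++ m ++ t).
Proof.
move=> ls lt lm cm; have lift := letters_mono (leqnSn p).
rewrite /reduced !letters_cat lm lift ?lift //=.
have absent z : letters p z -> count_mem p.+1 z = 0%N.
  by move=> lz; apply/count_memPn; exact: notin_letters lz (ltnSn p).
by rewrite !count_cat (absent s) // (absent t) // addn0.
Qed.

Lemma sandwich_reduced p a : (p.+1 <= N.-1)%N -> reduced p a ->
  span (reduced p.+1) (theta (p.+1 :: a ++ [:: p.+1])).
Proof.
move=> le_pN /andP[la ca].
have [pa|pa] := boolP (p \in a); last first.
  rewrite sandwich_free //; last exact: letters_notin.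
  have red : reduced p.+1 (a ++ [:: p.+1] ++ [::]).
    by apply: reduced_insert => //; rewrite /letters /=; lia.
  by rewrite cats0 in red; apply: spanD; [apply: spanq | apply: spanqi]; apply: span_word.
have [s [t [ea ps]]] := split_first pa; subst a.
move: la ca; rewrite letters_cat letters_cons count_cat count_mem_cons eqxx (count_memPn ps).
move=> /and3P[ls range_p lt] ct.
have pt : p \notin t by apply/count_memPn; lia.
have ge1_p : (1 <= p)%N by case/andP: range_p.
have red m : letters p.+1 m -> (count_mem p.+1 m <= 1)%N ->
    span (reduced p.+1) (theta (s ++ m ++ t)).
  by move=> lm cm; apply: span_word; apply: reduced_insert.
rewrite sandwich_braid //; try exact: letters_notin.
apply: spanD; [apply: spanD | apply: spanN];
  [apply: (red [:: p; p.+1; p]) | apply: (red [:: p.+1]) | apply: (red [:: p])];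
  rewrite /letters /=; lia.
Qed.

Lemma reduce_top_letter p : (p.+1 < N)%N ->
  (forall a, letters p a -> span (reduced p) (theta a)) ->
  forall w, letters p.+1 w -> span (reduced p.+1) (theta w).
Proof.
move=> lt_pN normal_p w; have [c] := ubnP (count_mem p.+1 w).
elim: c w => // c IHc w lt_wc lw.
have [le1|gt1] := leqP (count_mem p.+1 w) 1.
  by apply: span_word; rewrite /reduced lw le1.
have [x [a [y [ew px pa]]]] := split_two gt1; subst w.
move: lw lt_wc; rewrite !(letters_cat, letters_cons, count_cat, count_mem_cons) eqxx.
rewrite (count_memPn px) (count_memPn pa) => /and5P[lx _ la _ ly] lt_yc.
have middle : span (reduced p.+1) (theta (p.+1 :: a ++ [:: p.+1])).
  have := span_mul q_central qi_central [:: p.+1] [:: p.+1] (normal_p _ (letters_notin la pa)).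
  rewrite -!theta_cat => span_a; apply: span_trans span_a _ => _ [a' red_a' ->].
  apply: sandwich_reduced red_a' ; lia.
have -> : theta (x ++ p.+1 :: a ++ p.+1 :: y) = theta x * theta (p.+1 :: a ++ [:: p.+1]) * theta y.
  by rewrite -!theta_cat -catA /= -catA.
apply: span_trans (span_mul q_central qi_central x y middle) _ => _ [z /andP[lz cz] ->].
apply: IHc; last by rewrite !letters_cat lx lz ly.
by rewrite !count_cat (count_memPn px); lia.
Qed.

Lemma normal_form p : (p < N)%N ->
  forall w, letters p w -> span (reduced p) (theta w).
Proof.
elim: p => [|p IHp] lt_pN w lw; last exact: reduce_top_letter (IHp (ltnW lt_pN)) w lw.
have -> : w = [::] by case: w lw => // i w /andP[]; lia.
exact: span_word.
Qed.

End NormalForm.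

Lemma additive_zero (U V : zmodType) (f : U -> V) :
  (forall x y, f (x + y) = f x + f y) -> f 0 = 0.
Proof. by move=> fD; apply: (addrI (f 0)); rewrite -fD !addr0. Qed.

Lemma additive_opp (U V : zmodType) (f : U -> V) :
  (forall x y, f (x + y) = f x + f y) -> forall x, f (- x) = - f x.
Proof. by move=> fD x; apply: (addrI (f x)); rewrite -fD !subrr (additive_zero fD). Qed.

Lemma is_word_small n w : (n <= 1)%N -> is_word n w -> w = [::].
Proof. by case: w => // i w le1_n /andP[]; lia. Qed.

Section Uniqueness.
Variables (H : nat -> pzRingType) (q qi : forall n, H n).
Variables (th : forall n, nat -> H n) (iota : forall n, H n -> H n.+1).
Arguments iota : clear implicits.
Hypothesis hecke : hecke_family q qi th iota.
Local Notation theta n := (theta_word (th n)).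

(* q^-1 is central, being the inverse of the central q. *)
Lemma hecke_qi_central n (y : H n) : qi n * y = y * qi n.
Proof.
have [[q_qi qi_q] q_central] := (proj1 hecke n, proj1 (proj2 hecke) n).
by rewrite -[qi n * y]mulr1 -q_qi mulrA -(mulrA _ y) -q_central mulrA qi_q mul1r.
Qed.

Lemma hecke_spanning n (x : H n) : hspan (q n) (qi n) (th n) (fun w => is_word n w) x.
Proof.
have [_ [_ [_ [_ [_ [spanning _]]]]]] := hecke.
have [s [words_s ->]] := spanning n x.
elim: s words_s => [|[[z m] w] s IHs] /=; first by rewrite big_nil => _; apply: span0.
move=> /andP[word_w words_s]; rewrite big_cons; apply: spanD (IHs words_s).
by rewrite -mulrA; apply/span_intmul/span_qpow/span_word.
Qed.

Lemma hecke_normal_form k w : letters k.+1 w ->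
  hspan (q k.+2) (qi k.+2) (th k.+2) (fun w => reduced k.+1 w) (theta k.+2 w).
Proof.
have [_ [q_central [theta_sq [theta_far [theta_braid _]]]]] := hecke.
exact: (normal_form (q_central k.+2) (@hecke_qi_central k.+2) (theta_sq k.+2)
  (theta_far k.+2) (theta_braid k.+2) (ltnSn k.+1) (w := w)).
Qed.

Lemma iota_theta n w : is_word n w -> iota n (theta n w) = theta n.+1 w.
Proof.
have [iota1 [_ [_ [iotaM iota_th]]]] := proj2 (proj2 (proj2 (proj2 (proj2 (proj2 hecke))))) n.
elim: w => [|i w IH] /=; first by rewrite !theta_nil iota1.
by move=> /andP[range_i word_w]; rewrite !theta_cons iotaM iota_th // IH.
Qed.

(* Any trace family reduces a word with a single top letter one level down:
   phi_{k+2}(theta_s theta_{k+1} theta_t) = phi_{k+1}(theta_t theta_s),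
   by cyclicity (i) and the Markov-type property (iv). *)
Lemma trace_top_letter phi : trace_family q qi th iota phi ->
  forall k s t, letters k s -> letters k t ->
  phi k.+2 (theta k.+2 (s ++ k.+1 :: t)) = phi k.+1 (theta k.+1 (t ++ s)).
Proof.
move=> [_ [_ [_ [phi_comm [_ [_ [_ phi_markov]]]]]]] k s t ls lt.
have word_ts : is_word k.+1 (t ++ s) by rewrite [is_word _ _]letters_cat lt ls.
by rewrite theta_cat theta_cons phi_comm -mulrA -theta_cat -iota_theta // phi_markov.
Qed.

Variables phi psi : forall n, H n -> Qq.
Arguments phi : clear implicits.
Arguments psi : clear implicits.
Hypotheses (trace_phi : trace_family q qi th iota phi)
           (trace_psi : trace_family q qi th iota psi).

Lemma agree_on_span n S x : hspan (q n) (qi n) (th n) S x ->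
  (forall w, S w -> phi n (theta n w) = psi n (theta n w)) -> phi n x = psi n x.
Proof.
have [phiD [phiq [phiqi _]]] := trace_phi; have [psiD [psiq [psiqi _]]] := trace_psi.
move=> Sx agree_S; elim: Sx => [w /agree_S //| |x1 y1 _ e1 _ e2|x1 _ e1|x1 _ e1|x1 _ e1].
- by rewrite (additive_zero (phiD n)) (additive_zero (psiD n)).
- by rewrite phiD psiD e1 e2.
- by rewrite (additive_opp (phiD n)) (additive_opp (psiD n)) e1.
- by rewrite phiq psiq e1.
- by rewrite phiqi psiqi e1.
Qed.

Lemma agree_on_words n w : is_word n w -> phi n (theta n w) = psi n (theta n w).
Proof.
have [_ [_ [_ [_ [phi0 [phi1 [phi_absent _]]]]]]] := trace_phi.
have [_ [_ [_ [_ [psi0 [psi1 [psi_absent _]]]]]]] := trace_psi.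
elim/ltn_ind: n w => -[|[|k]] IH w word_w.
- by rewrite (is_word_small _ word_w) // theta_nil phi0 psi0.
- by rewrite (is_word_small _ word_w) // theta_nil phi1 psi1.
apply: (agree_on_span (hecke_normal_form word_w)) => w' /andP[lw' cw'].
have [top|top] := boolP (k.+1 \in w'); last first.
  have absent : exists i, [/\ 1 <= i, i <= k.+2.-1 & i \notin w']%N by exists k.+1.
  by rewrite (phi_absent k.+2 w' isT lw' absent) (psi_absent k.+2 w' isT lw' absent).
have [s [t [ew ks]]] := split_first top; subst w'.
move: lw' cw'; rewrite letters_cat letters_cons count_cat count_mem_cons eqxx (count_memPn ks).
move=> /and3P[ls _ lt] ct; have kt : k.+1 \notin t by apply/count_memPn; lia.
have ls' : letters k s := letters_notin ls ks.
have lt' : letters k t := letters_notin lt kt.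
rewrite !trace_top_letter //; apply: IH => //.
by rewrite [is_word _ _]letters_cat ls' lt'.
Qed.

End Uniqueness.

Unset Implicit Arguments.
Set Strict Implicit.

Theorem mainTheorem3 (H : nat -> pzRingType) (q qi : forall n, H n)
    (th : forall n, nat -> H n) (iota : forall n, H n -> H n.+1) :
  hecke_family q qi th iota ->
  forall phi psi : forall n, H n -> Qq,
    trace_family q qi th iota phi -> trace_family q qi th iota psi ->
    forall n (x : H n), phi n x = psi n x.
Proof.
move=> hecke phi psi trace_phi trace_psi n x.
apply: (agree_on_span trace_phi trace_psi (hecke_spanning hecke x)) => w word_w.
exact: (agree_on_words hecke trace_phi trace_psi word_w).
Qed.
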